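(* Let $\mathcal V$ be a finitely generated variety of cBCK-algebras which is $1$-generated, and let $\mathcal W$ be a cover of $\mathcal V$ in the lattice of varieties of cBCK-algebras. Then $\mathcal W$ is $n$-generated for some $n\le 2$.
   Context: A BCK-algebra is an algebra $(A,\ominus,0)$ of type $(2,0)$ satisfying $((x\ominus y)\ominus(x\ominus z))\ominus(z\ominus y)=0$, $x\ominus 0=x$, $0\ominus x=0$, and ($x\ominus y=0$ and $y\ominus x=0$ imply $x=y$). A cBCK-algebra is a BCK-algebra satisfying $x\ominus(x\ominus y)=y\ominus(y\ominus x)$; cBCK-algebras form a variety. A variety $\mathcal V$ of cBCK-algebras is $n$-generated if there is an $n$-element set of mutually non-isomorphic subdirectly irreducible algebras of $\mathcal V$ generating $\mathcal V$, and there is no set of subdirectly irreducible algebras of smaller cardinality with this property. A cover of a variety $\mathcal V$ is a variety $\mathcal W\supsetneq\mathcal V$ with no variety strictly between them. *)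

From mathcomp Require Import all_boot.
Set Implicit Arguments. Unset Strict Implicit. Unset Printing Implicit Defensive.

Record cBCK := CBCK {
  car :> Type;
  bsub : car -> car -> car;
  bzero : car;
  bck1 : forall x y z, bsub (bsub (bsub x y) (bsub x z)) (bsub z y) = bzero;
  bck2 : forall x, bsub x bzero = x;
  bck3 : forall x, bsub bzero x = bzero;
  bck4 : forall x y, bsub x y = bzero -> bsub y x = bzero -> x = y;
  cbck : forall x y, bsub x (bsub x y) = bsub y (bsub y x)
}.

Inductive term : Type :=
| TVar : nat -> term
| TZero : term
| TSub : term -> term -> term.

Fixpoint teval (A : cBCK) (v : nat -> A) (t : term) : A :=
  match t with
  | TVar n => v n
  | TZero => bzero A
  | TSub s u => bsub (teval v s) (teval v u)
  end.

Definition identity := (term * term)%type.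

Definition holds (A : cBCK) (e : identity) : Prop :=
  forall v : nat -> A, teval v e.1 = teval v e.2.

(** A class of cBCK-algebras, and varieties = equational classes
    (relative to cBCK-algebras, which form a variety). *)
Definition cls := cBCK -> Prop.

Definition subcls (U V : cls) : Prop := forall A, U A -> V A.

Definition is_variety (V : cls) : Prop :=
  exists E : identity -> Prop, forall A, V A <-> (forall e, E e -> holds A e).

(** V is the variety generated by the family K i (i < n):
    V = Mod(Id(K)) = HSP(K) (Birkhoff). *)
Definition generates (V : cls) (n : nat) (K : 'I_n -> cBCK) : Prop :=
  forall A, V A <-> (forall e, (forall i, holds (K i) e) -> holds A e).

Definition finite_alg (A : cBCK) : Prop :=
  exists l : seq A, forall x : A, exists2 i, i < size l & nth x l i = x.

Definition finitely_generated (V : cls) : Prop :=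
  exists n (K : 'I_n -> cBCK), (forall i, finite_alg (K i)) /\ generates V K.

Definition iso (A B : cBCK) : Prop :=
  exists (f : A -> B) (g : B -> A),
    (forall x, g (f x) = x) /\ (forall y, f (g y) = y) /\
    f (bzero A) = bzero B /\ (forall x y, f (bsub x y) = bsub (f x) (f y)).

(** Congruences and subdirect irreducibility (monolith characterisation:
    A is nontrivial and there is a pair a <> b contained in every
    nontrivial congruence). *)
Definition congruence (A : cBCK) (R : A -> A -> Prop) : Prop :=
  (forall x, R x x) /\ (forall x y, R x y -> R y x) /\
  (forall x y z, R x y -> R y z -> R x z) /\
  (forall x x' y y', R x x' -> R y y' -> R (bsub x y) (bsub x' y')).

Definition subdirectly_irreducible (A : cBCK) : Prop :=
  exists a b : A, a <> b /\
    forall R, congruence R -> (exists x y, R x y /\ x <> y) -> R a b.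

Definition si_generating_family (V : cls) (n : nat) (K : 'I_n -> cBCK) : Prop :=
  (forall i, V (K i) /\ subdirectly_irreducible (K i)) /\
  (forall i j, i <> j -> ~ iso (K i) (K j)) /\
  generates V K.

Definition n_generated (V : cls) (n : nat) : Prop :=
  (exists K : 'I_n -> cBCK, si_generating_family V K) /\
  (forall m (K : 'I_m -> cBCK), m < n -> ~ si_generating_family V K).

Definition variety_cover (V W : cls) : Prop :=
  is_variety W /\ subcls V W /\ ~ subcls W V /\
  forall U, is_variety U -> subcls V U -> subcls U W -> subcls U V \/ subcls W U.

From mathcomp Require Import all_boot.
From mathcomp Require Import boolp classical_sets.

Set Implicit Arguments. Unset Strict Implicit. Unset Printing Implicit Defensive.

(* Since W is not contained in V, some algebra of W violates an identity of V
   under some valuation.  Quotienting it by a congruence that is maximal (Zorn)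
   among those separating the two values of that instance yields a subdirectly
   irreducible algebra B in W \ V.  The variety generated by the s.i. generator
   K of V together with B lies in W but not in V, so by the cover property it
   is W; and B is not isomorphic to K since V is closed under isomorphism. *)

Lemma cbck_antisym (T : Type) (s : T -> T -> T) (z : T) :
  (forall x, s x z = x) -> (forall x y, s x (s x y) = s y (s y x)) ->
  forall x y, s x y = z -> s y x = z -> x = y.
Proof.
move=> s_x0 s_comm x y xy0 yx0.
by rewrite -[x]s_x0 -xy0 s_comm yx0 s_x0.
Qed.

Section Quotient.

Variables (A : cBCK) (th : A -> A -> Prop).
Hypothesis th_cong : congruence th.

Definition quot_car := {P : A -> Prop | exists x, P = th x}.

Definition qclass (x : A) : quot_car := exist _ (th x) (ex_intro _ x erefl).

Definition qrepr (q : quot_car) : A := sval (cid (svalP q)).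

Lemma qreprK : cancel qrepr qclass.
Proof.
case=> P hP; apply: eq_exist; rewrite /qrepr /=.
by case: (cid _) => x /= ->.
Qed.

Lemma qclass_ind (P : quot_car -> Prop) : (forall x, P (qclass x)) -> forall q, P q.
Proof. by move=> Px q; rewrite -(qreprK q). Qed.

Lemma qclass_eq x y : qclass x = qclass y <-> th x y.
Proof.
have [th_refl [th_sym [th_trans _]]] := th_cong; split.
  by move=> /(congr1 sval) /= ->; apply: th_refl.
move=> th_xy; apply: eq_exist; apply/funext => z; apply/propext.
by split=> [/(th_trans _ _ _ (th_sym _ _ th_xy))|/(th_trans _ _ _ th_xy)].
Qed.

Definition qsub (p q : quot_car) : quot_car := qclass (bsub (qrepr p) (qrepr q)).

Lemma qsubE x y : qsub (qclass x) (qclass y) = qclass (bsub x y).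
Proof.
apply/qclass_eq; have [_ [_ [_ th_sub]]] := th_cong.
by apply: th_sub; apply/qclass_eq; rewrite qreprK.
Qed.

Let qzero := qclass (bzero A).

Lemma quot_bck1 x y z : qsub (qsub (qsub x y) (qsub x z)) (qsub z y) = qzero.
Proof.
elim/qclass_ind: x => x; elim/qclass_ind: y => y; elim/qclass_ind: z => z.
by rewrite !qsubE bck1.
Qed.

Lemma quot_bck2 x : qsub x qzero = x.
Proof. by elim/qclass_ind: x => x; rewrite qsubE bck2. Qed.

Lemma quot_bck3 x : qsub qzero x = qzero.
Proof. by elim/qclass_ind: x => x; rewrite qsubE bck3. Qed.

Lemma quot_cbck x y : qsub x (qsub x y) = qsub y (qsub y x).
Proof. by elim/qclass_ind: x => x; elim/qclass_ind: y => y; rewrite !qsubE cbck. Qed.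

Definition quot : cBCK :=
  @CBCK quot_car qsub qzero quot_bck1 quot_bck2 quot_bck3
    (cbck_antisym quot_bck2 quot_cbck) quot_cbck.

End Quotient.

Section Homomorphisms.

Variables (A B : cBCK) (f : A -> B).
Hypotheses (f0 : f (bzero A) = bzero B)
  (f_sub : forall x y, f (bsub x y) = bsub (f x) (f y)).

Lemma teval_hom v t : teval (f \o v) t = f (teval v t).
Proof. by elim: t => [n||s IHs u IHu] //=; rewrite IHs IHu f_sub. Qed.

Lemma holds_split_epi (g : B -> A) e : cancel g f -> holds A e -> holds B e.
Proof.
move=> gK Ae v; have -> : v = f \o (g \o v) by apply/funext => n /=; rewrite gK.
by rewrite !teval_hom Ae.
Qed.

End Homomorphisms.

Lemma iso_sym (A B : cBCK) : iso A B -> iso B A.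
Proof.
case=> f [g [fK [gK [f0 f_sub]]]]; exists g, f; do 3 (split=> //).
  by rewrite -f0 fK.
by move=> x y; rewrite -{1}(gK x) -{1}(gK y) -f_sub fK.
Qed.

Lemma variety_iso (V : cls) (A B : cBCK) : is_variety V -> iso A B -> V A -> V B.
Proof.
case=> E VE [f [g [_ [gK [f0 f_sub]]]]] /VE VA; apply/VE => e Ee.
exact: (holds_split_epi f0 f_sub gK (VA e Ee)).
Qed.

Section QuotientIdentities.

Variables (A : cBCK) (th : A -> A -> Prop) (th_cong : congruence th).

Lemma qclass_sub x y :
  qclass th (bsub x y) = bsub (qclass th x : quot th_cong) (qclass th y).
Proof. by rewrite /= qsubE. Qed.

Lemma quot_holds e : holds A e -> holds (quot th_cong) e.
Proof. exact: (holds_split_epi (B:=quot th_cong) erefl qclass_sub (@qreprK A th)). Qed.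

Lemma quot_holds_rel e v : holds (quot th_cong) e -> th (teval v e.1) (teval v e.2).
Proof.
move=> He; apply/(qclass_eq th_cong).
by rewrite -!(teval_hom (B:=quot th_cong) erefl qclass_sub); apply: He.
Qed.

Lemma variety_quot (W : cls) : is_variety W -> W A -> W (quot th_cong).
Proof. by case=> E WE /WE WA; apply/WE => e /WA /quot_holds. Qed.

End QuotientIdentities.

Section MaximalCongruence.

Local Open Scope classical_set_scope.

Variable A : cBCK.

(* Relations are encoded as sets of pairs, closed reflexively, so that the
   union of the empty chain is still a reflexive relation. *)
Definition reflc (X : set (A * A)) (x y : A) : Prop := x = y \/ X (x, y).

Lemma reflc_sub (X Y : set (A * A)) x y : X `<=` Y -> reflc X x y -> reflc Y x y.
Proof. by move=> XY [->|Xxy]; [left|right; apply: XY]. Qed.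

Lemma congruence_reflc0 : congruence (reflc set0).
Proof.
split; first by left.
split; first by move=> x y [->|[]]; left.
split; first by move=> x y z [->|[]] [->|[]]; left.
by move=> x x' y y' [->|[]] [->|[]]; left.
Qed.

Section Chain.

Variable F : set (set (A * A)).
Hypotheses (F_cong : forall X, F X -> congruence (reflc X))
  (F_chain : total_on F subset).

Let U := \bigcup_(X in F) X.

Lemma chain_reflc_common x1 y1 x2 y2 : reflc U x1 y1 -> reflc U x2 y2 ->
  exists X, [/\ congruence (reflc X), X `<=` U, reflc X x1 y1 & reflc X x2 y2].
Proof.
have sub_U X : F X -> X `<=` U by move=> FX p Xp; exists X.
move=> [->|[X1 FX1 H1]] [->|[X2 FX2 H2]].
- by exists set0; split=> //; [exact: congruence_reflc0|left|left].
- by exists X2; split; [exact: F_cong|exact: sub_U|left|right].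
- by exists X1; split; [exact: F_cong|exact: sub_U|right|left].
- have [X12|X21] := F_chain FX1 FX2.
    by exists X2; split; [exact: F_cong|exact: sub_U|right; apply: X12|right].
  by exists X1; split; [exact: F_cong|exact: sub_U|right|right; apply: X21].
Qed.

Lemma congruence_reflc_bigcup : congruence (reflc U).
Proof.
split; first by left.
split.
  move=> x y Hxy; have [X [[_ [X_sym _]] XU Hxy' _]] := chain_reflc_common Hxy Hxy.
  exact: reflc_sub XU (X_sym _ _ Hxy').
split.
  move=> x y z Hxy Hyz.
  have [X [[_ [_ [X_trans _]]] XU Hxy' Hyz']] := chain_reflc_common Hxy Hyz.
  exact: reflc_sub XU (X_trans _ _ _ Hxy' Hyz').
move=> x x' y y' Hx Hy.
have [X [[_ [_ [_ X_sub]]] XU Hx' Hy']] := chain_reflc_common Hx Hy.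
exact: reflc_sub XU (X_sub _ _ _ _ Hx' Hy').
Qed.

End Chain.

Lemma maximal_separating_congruence (a b : A) :
  exists M, [/\ congruence (reflc M), ~ M (a, b) &
    forall Y, M `<` Y -> congruence (reflc Y) -> Y (a, b)].
Proof.
pose P X := congruence (reflc X) /\ ~ X (a, b).
have [M [[M_cong Mab] M_max]] : exists M, P M /\ forall Y, M `<` Y -> ~ P Y.
  apply: Zorn_bigcup => F FP F_chain; split.
    by apply: congruence_reflc_bigcup F_chain => X /FP [].
  by case=> X /FP [].
exists M; split=> // Y MY Y_cong; apply: contrapT => Yab.
exact: M_max MY (conj Y_cong Yab).
Qed.

Lemma si_quot_maximal (a b : A) (M : set (A * A)) (M_cong : congruence (reflc M)) :
  a <> b -> ~ M (a, b) ->
  (forall Y, M `<` Y -> congruence (reflc Y) -> Y (a, b)) ->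
  subdirectly_irreducible (quot M_cong).
Proof.
move=> ab Mab M_max; pose cl := qclass (reflc M).
exists (cl a), (cl b); split; first by move/(qclass_eq M_cong) => [/ab|/Mab].
move=> R [R_refl [R_sym [R_trans R_sub]]] [x [y [Rxy xy]]].
(* The pullback [Y] of [R] is a congruence strictly above [M], hence contains [(a, b)]. *)
pose Y := fun p : A * A => R (cl p.1) (cl p.2).
have reflc_Y u w : reflc Y u w -> R (cl u) (cl w) by case=> [->|].
apply: (M_max Y); last first.
  split; first by left.
  split; first by move=> u w /reflc_Y /R_sym; right.
  split; first by move=> u w z /reflc_Y Ruw /reflc_Y /(R_trans _ _ _ Ruw); right.
  move=> u u' w w' /reflc_Y Ru /reflc_Y Rw; right.
  by have := R_sub _ _ _ _ Ru Rw; rewrite /= !qsubE.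
split.
  by case=> u w Muw; rewrite /Y /= (_ : cl u = cl w) //; apply/(qclass_eq M_cong); right.
elim/qclass_ind: x Rxy xy => x; elim/qclass_ind: y => y Rxy xy YM.
by apply: xy; apply/(qclass_eq M_cong); right; apply: YM.
Qed.

Lemma si_quot_separating (a b : A) : a <> b ->
  exists th (th_cong : congruence th), ~ th a b /\ subdirectly_irreducible (quot th_cong).
Proof.
move=> ab; have [M [M_cong Mab M_max]] := maximal_separating_congruence a b.
exists (reflc M), M_cong; split; first by case=> [/ab|/Mab].
exact: (si_quot_maximal M_cong ab Mab M_max).
Qed.

End MaximalCongruence.

Lemma si_witness_outside (V W : cls) : is_variety V -> is_variety W -> ~ subcls W V ->
  exists B, [/\ W B, subdirectly_irreducible B & ~ V B].
Proof.
move=> [E VE] varW notWV.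
have /existsNP [A /not_implyP [WA notVA]] := notWV.
have /existsNP [e /not_implyP [Ee /existsNP [v nv]]] : ~ forall e, E e -> holds A e.
  by move/VE.
have [th [th_cong [nth siB]]] := si_quot_separating nv.
exists (quot th_cong); split=> //; first exact: variety_quot.
by move=> /VE /(_ e Ee) /(quot_holds_rel v).
Qed.

Definition gen_variety n (K : 'I_n -> cBCK) : cls :=
  fun A => forall e, (forall i, holds (K i) e) -> holds A e.

Section GeneratedVariety.

Variables (n : nat) (K : 'I_n -> cBCK).

Lemma gen_variety_is_variety : is_variety (gen_variety K).
Proof. by exists (fun e => forall i, holds (K i) e). Qed.

Lemma generates_is_variety (V : cls) : generates V K -> is_variety V.
Proof. by move=> genV; exists (fun e => forall i, holds (K i) e). Qed.

Lemma gen_variety_mem i : gen_variety K (K i).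
Proof. by move=> e; apply. Qed.

Lemma gen_variety_min (W : cls) :
  is_variety W -> (forall i, W (K i)) -> subcls (gen_variety K) W.
Proof. by case=> E WE WK A KA; apply/WE => e Ee; apply: KA => i; apply/WE: e Ee. Qed.

End GeneratedVariety.

Section CoverExtension.

Variables (n : nat) (K : 'I_n -> cBCK).

Definition ext_family (B : cBCK) (i : 'I_n.+1) : cBCK :=
  if unlift ord_max i is Some j then K j else B.

Lemma ext_family_lift B j : ext_family B (lift ord_max j) = K j.
Proof. by rewrite /ext_family liftK. Qed.

Lemma ext_family_max B : ext_family B ord_max = B.
Proof. by rewrite /ext_family unlift_none. Qed.

Variables (V W : cls) (B : cBCK).
Hypotheses (cover : variety_cover V W) (WB : W B) (notVB : ~ V B).

Lemma cover_generated_ext : generates V K -> generates W (ext_family B).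
Proof.
move=> genV; have [varW [VW [_ cover_min]]] := cover.
have UW : subcls (gen_variety (ext_family B)) W.
  apply: gen_variety_min => // i; case: (unliftP ord_max i) => [j ->|->].
    by rewrite ext_family_lift; apply/VW/genV/gen_variety_mem.
  by rewrite ext_family_max.
have VU : subcls V (gen_variety (ext_family B)).
  by move=> A /genV VA e He; apply: VA => j; rewrite -(ext_family_lift B); apply: He.
have [UV|WU] := cover_min _ (gen_variety_is_variety _) VU UW.
  by case: notVB; apply: UV; rewrite -{2}(ext_family_max B); apply: gen_variety_mem.
by move=> A; split; [apply: WU|apply: UW].
Qed.

Lemma cover_si_family_ext : si_generating_family V K -> subdirectly_irreducible B ->
  si_generating_family W (ext_family B).
Proof.
move=> [K_si [K_noniso genV]] siB; have varV := generates_is_variety genV.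
have [_ [VW _]] := cover.
split; last split; last exact: cover_generated_ext.
  move=> i; case: (unliftP ord_max i) => [j ->|->];
    rewrite ?ext_family_lift ?ext_family_max //.
  by have [/VW] := K_si j.
have notV_iso j : ~ iso (K j) B by move=> /(variety_iso varV) /(_ (K_si j).1).
move=> i1 i2; case: (unliftP ord_max i1) => [j1 ->|->];
  case: (unliftP ord_max i2) => [j2 ->|->] //;
  rewrite ?ext_family_lift ?ext_family_max.
- by move=> ne; apply: K_noniso => j12; apply: ne; rewrite j12.
- by move=> _; apply: notV_iso.
- by move=> _ /iso_sym; apply: notV_iso.
Qed.

End CoverExtension.

Lemma n_generated_exists_le (W : cls) m (K : 'I_m -> cBCK) :
  si_generating_family W K -> exists2 n, n <= m & n_generated W n.
Proof.
elim/ltn_ind: m K => m IHm K famK.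
have [[m' [K' [lt_m'm famK']]]|none] :=
  pselect (exists m' (K' : 'I_m' -> cBCK), m' < m /\ si_generating_family W K').
  have [n le_nm' genW] := IHm m' lt_m'm K' famK'.
  by exists n => //; apply: leq_trans le_nm' (ltnW lt_m'm).
exists m => //; split; first by exists K.
by move=> m' K' lt_m'm famK'; apply: none; exists m', K'.
Qed.

Theorem mainTheorem11 (V W : cls) :
  is_variety V -> finitely_generated V -> n_generated V 1 -> variety_cover V W ->
  exists n, n <= 2 /\ n_generated W n.
Proof.
move=> varV _ [[K famK] _] cover; have [varW [_ [notWV _]]] := cover.
have [B [WB siB notVB]] := si_witness_outside varV varW notWV.
have famW := cover_si_family_ext cover WB notVB famK siB.
have [n le_n2 genW] := n_generated_exists_le famW.
by exists n.
Qed.
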